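(* Let $G$ be a simple 2-connected plane graph and let $(a,b)$ be an admissible state of $G$. Then $$A(a,b)=\sum_{p}\Big( l(p)(a_p+b_p)^2+2(a_p+b_p)\sum_{v\in p}(b_v-b_p)+\sum_{vv'\in p}(b_v-b_p)(b_{v'}-b_p)\Big)+\sum_{vv'\in p_\infty} b_v b_{v'},$$ where $p$ runs over the bounded faces of $G$, $\sum_{vv'\in p}$ runs over the edges on the boundary of $p$, and $\sum_{vv'\in p_\infty}$ runs over the edges on the boundary of the unbounded face. Every summand on the right-hand side is nonnegative; in particular $A(a,b)\ge 0$.
   Context: A simple 2-connected plane graph $G$ is a simple 2-connected planar graph with a fixed embedding in the plane, so every face is bounded by a cycle. Let $p_\infty$ be the unbounded face. For a face $p$, $l(p)$ is the number of edges on its boundary, $v\in p$ means $v$ is a vertex on the boundary of $p$, and $vv'\in p$ means $vv'$ is an edge on the boundary of $p$. A boundary vertex is a vertex on $p_\infty$. An admissible state $(a,b)$ assigns an integer $a_p$ to each bounded face $p$ and an integer $b_v$ to each vertex $v$ such that $a_p+b_v\ge 0$ whenever $p$ is bounded and $v\in p$, and $b_v\ge 0$ for every boundary vertex $v$ (one sets $a_{p_\infty}=0$). For a bounded face $p$, $b_p=\min_{v\in p} b_v$. Define $$A(a,b)=\sum_{p}\Big(l(p)a_p^2+2a_p\sum_{v\in p}b_v\Big)+2\sum_{vv'\in E(G)} b_vb_{v'},\qquad B(a,b)=2\sum_{v}b_v+\sum_p (l(p)-2)a_p,$$ where $p$ runs over the bounded faces, $v$ over all vertices, and the last sum in $A$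 over all edges of $G$. *)

(* A plane graph is encoded as a combinatorial map
   (rotation system) of genus 0, the standard combinatorial model of a
   connected graph with a fixed embedding in the plane. *)
From HB Require Import structures.
From mathcomp Require Import all_boot all_order all_algebra.
Set Implicit Arguments. Unset Strict Implicit. Unset Printing Implicit Defensive.
Import Order.TTheory GRing.Theory Num.Theory.
Local Open Scope ring_scope.

Section PlaneGraph.
(* D : darts (half-edges), V : vertices, F : faces.
   e : edge involution (the other half of the same edge),
   n : rotation of the darts around their tail vertex,
   vert d : tail vertex of dart d, fc d : face to the left of d
   (faces are the orbits of the face permutation  d |-> n (e d)). *)
Variables (D V F : finType) (e n : D -> D) (vert : D -> V) (fc : D -> F).

Definition face_perm (d : D) : D := n (e d).

Definition adj (u v : V) : bool := [exists d, (vert d == u) && (vert (e d) == v)].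

Definition graph_edges : {set {set V}} := [set [set vert d; vert (e d)] | d : D].

Definition face_verts (p : F) : {set V} := [set vert d | d in [set d | fc d == p]].
Definition face_edges (p : F) : {set {set V}} :=
  [set [set vert d; vert (e d)] | d in [set d | fc d == p]].

Definition flen (p : F) : nat := #|face_edges p|.

Definition plane_map : Prop :=
  [/\ (forall d, e (e d) = d) /\ (forall d, e d != d) /\ injective n,
      (forall d d', vert d = vert d' <-> fconnect n d d') /\
      (forall v, exists d, vert d = v),
      (forall d d', fc d = fc d' <-> fconnect face_perm d d') /\
      (forall p, exists d, fc d = p),
      (forall d d', connect (fun x y => (y == e x) || (y == n x)) d d')
    & ((#|V| + #|F|) * 2 = #|D| + 4)%N ].

Definition simple_map : Prop :=
  (forall d, vert (e d) != vert d) /\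
  (forall d d', vert d = vert d' -> vert (e d) = vert (e d') -> d = d').

Definition two_connected : Prop :=
  (3 <= #|V|)%N /\
  forall x y z, y != x -> z != x ->
    connect (fun u w => [&& adj u w, u != x & w != x]) y z.

Definition simple_2conn_plane_graph : Prop :=
  [/\ plane_map, simple_map & two_connected].

(* admissible state, pinf being the unbounded face *)
Definition admissible (pinf : F) (a : F -> int) (b : V -> int) : Prop :=
  (forall p v, p != pinf -> v \in face_verts p -> 0 <= a p + b v) /\
  (forall v, v \in face_verts pinf -> 0 <= b v).

(* b_p = min_{v in p} b_v  (the fold starts at a vertex of p) *)
Definition bface (b : V -> int) (p : F) : int :=
  match [pick d | fc d == p] with
  | Some d => \big[Num.min/b (vert d)]_(v in face_verts p) b v
  | None => 0
  end.

Definition Aform (pinf : F) (a : F -> int) (b : V -> int) : int :=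
  \sum_(p | p != pinf)
     ((flen p)%:R * a p ^+ 2 + 2 * a p * \sum_(v in face_verts p) b v)
  + 2 * \sum_(s in graph_edges) \prod_(v in s) b v.

Definition Bform (pinf : F) (a : F -> int) (b : V -> int) : int :=
  2 * \sum_v b v + \sum_(p | p != pinf) ((flen p)%:R - 2) * a p.

End PlaneGraph.

(* The algebraic core is a per-face shift identity: replacing a_p by a_p + beta
   and b_v by b_v - beta leaves the face contribution unchanged, because the
   linear term  sum_{darts d of p} (b_{tail d} - b_{head d})  telescopes around
   the face.  This only makes sense if a face boundary is a genuine cycle of the
   graph, i.e. a face meets every vertex at most once (Jordan property).

   1. For permutations s, a of a finite set with a an involution and <s, a>
      transitive, 2 (#cycles(a s) + #cycles(s)) <= #moved(a) + 4; this is
      shown by peeling off the transpositions of a one at a time.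
   2. A plane map is such a pair (rotation, edge involution) for which Euler's
      formula turns this into an equality.  A face passing twice through a
      vertex could be cut, together with that vertex, into a transitive pair
      (by 2-connectedness) with one more face and one more vertex, violating 1.
   3. Face sums then become dart sums, every edge is carried by two darts, and
      the shift identity with beta_p := b_p = min_{v in p} b_v gives the
      decomposition; admissibility makes every term nonnegative. *)

From HB Require Import structures.
From mathcomp Require Import all_boot all_order all_algebra all_fingroup.
From mathcomp Require Import zify ring.
Import Order.TTheory GRing.Theory Num.Theory.
Set Implicit Arguments. Unset Strict Implicit. Unset Printing Implicit Defensive.

Section PermutationGenus.
Variable T : finType.
Local Open Scope group_scope.

Definition ncycles (s : {perm T}) : nat := #|porbits s|.
Definition nmoved (a : {perm T}) : nat := #|[set x | a x != x]|.

Definition transitive_pair (s a : {perm T}) : Prop :=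
  forall x y, connect (fun u w => (w == s u) || (w == a u)) x y.

Lemma ncycles_tperm (s : {perm T}) x y : x != y ->
  ncycles (tperm x y * s) =
    if y \in porbit s x then (ncycles s).+1 else (ncycles s).-1.
Proof.
move=> xy; have := porbits_mul_tperm s x y; rewrite /= xy porbit_sym /ncycles.
by case: (y \in _) => /=; lia.
Qed.

Lemma ncycles_mul_tperm_le (s : {perm T}) x y :
  ncycles (tperm x y * s) <= (ncycles s).+1.
Proof.
case: (eqVneq x y) => [->|xy]; first by rewrite tperm1 mul1g.
by rewrite ncycles_tperm //; case: ifP => _; lia.
Qed.

Lemma nmoved0 (a : {perm T}) : nmoved a = 0 -> a = 1.
Proof.
move/eqP; rewrite cards_eq0 => /eqP noMoved; apply/permP => z.
by rewrite perm1; apply/eqP/negPn/negP => az; have := in_set0 z; rewrite -noMoved inE az.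
Qed.

Definition peel (a : {perm T}) x : {perm T} := tperm x (a x) * a.

Section Peel.
Variables (a : {perm T}) (x : T).
Hypothesis aK : involutive a.

Lemma peel_x : peel a x x = x.
Proof. by rewrite permM tpermL aK. Qed.

Lemma peel_ax : peel a x (a x) = a x.
Proof. by rewrite permM tpermR. Qed.

Lemma peel_other z : z != x -> z != a x -> peel a x z = a z.
Proof. by move=> zx zax; rewrite permM tpermD // eq_sym. Qed.

Lemma peel_involutive : involutive (peel a x).
Proof.
move=> z; case: (eqVneq z x) => [->|zx]; first by rewrite !peel_x.
case: (eqVneq z (a x)) => [->|zax]; first by rewrite !peel_ax.
rewrite peel_other // peel_other ?aK //.
  by apply: contra_neq zax => /(congr1 a); rewrite aK => ->.
by apply: contra_neq zx => /(perm_inj (s := a)).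
Qed.

Lemma nmoved_peel : a x != x -> nmoved a = (nmoved (peel a x)).+2.
Proof.
move=> ax; rewrite /nmoved.
have -> : [set z | peel a x z != z] = [set z | a z != z] :\ x :\ a x.
  apply/setP => z; rewrite !inE.
  case: (eqVneq z (a x)) => [->|zax] /=; first by rewrite peel_ax eqxx.
  case: (eqVneq z x) => [->|zx] /=; first by rewrite peel_x eqxx.
  by rewrite peel_other.
rewrite (cardsD1 x [set z | a z != z]) (cardsD1 (a x) ([set z | a z != z] :\ x)).
by rewrite !inE ax aK eq_sym ax.
Qed.

Lemma peel_tperm_l : a = tperm x (a x) * peel a x.
Proof. by rewrite /peel mulgA tperm2 mul1g. Qed.

Lemma peel_tperm_r : a = peel a x * tperm x (a x).
Proof.
apply/permP => z; rewrite !permM.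
case: (eqVneq z x) => [->|zx]; first by rewrite tpermL aK tpermL.
case: (eqVneq z (a x)) => [->|zax]; first by rewrite tpermR tpermR aK.
rewrite (tpermD (z := z)) 1?eq_sym // tpermD //.
  by apply: contra_neq zax => ->; rewrite aK.
by rewrite (inj_eq (perm_inj (s := a))) eq_sym.
Qed.

End Peel.

Lemma ncycles_mul_involution (s a : {perm T}) : involutive a ->
  (ncycles (a * s)).*2 <= (ncycles s).*2 + nmoved a.
Proof.
elim: {a}_.+1 {-2}a (ltnSn (nmoved a)) => // N IH a aN aK.
case: (posnP (nmoved a)) => [/nmoved0 ->|mpos]; first by rewrite mul1g leq_addr.
have [x] : exists x, x \in [set z | a z != z] by apply/set0Pn; rewrite -card_gt0.
rewrite inE => ax.
have step : ncycles (a * s) <= (ncycles (peel a x * s)).+1.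
  by rewrite {1}(peel_tperm_l a x) -mulgA; exact: ncycles_mul_tperm_le.
have := IH (peel a x) _ (peel_involutive x aK).
rewrite (nmoved_peel aK ax) in aN *; rewrite -!muln2 in step *; lia.
Qed.

Lemma connect_along_porbit (s : {perm T}) (r : rel T) x y :
  (forall u, r u (s u)) -> y \in porbit s x -> connect r x y.
Proof.
move=> rs /porbitP [i ->]; rewrite permX.
elim: i => [|i IH] /=; first exact: connect0.
by apply: connect_trans IH (connect1 _); rewrite -(permX s x i); exact: rs.
Qed.

Lemma exists_crossing (s a : {perm T}) :
  transitive_pair s a -> 1 < ncycles s -> exists x, a x \notin porbit s x.
Proof.
move=> conn cs; case: (pickP (fun x => a x \notin porbit s x)) => [x Hx|aStays].
  by exists x.
have [_ /imsetP [x0 _ _]] : exists P, P \in porbits s.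
  by apply/set0Pn; rewrite -card_gt0; apply: ltnW.
have closedC : closed (fun u w => (w == s u) || (w == a u)) (porbit s x0).
  move=> z w /orP [/eqP->|/eqP->]; rewrite -!eq_porbit_mem.
    by have := porbit_perm s 1 z; rewrite expg1 => ->.
  by have /negbFE := aStays z; rewrite -eq_porbit_mem => /eqP ->.
have : porbits s \subset [set porbit s x0].
  apply/subsetP => _ /imsetP [y _ ->]; rewrite inE.
  have := closed_connect closedC (conn x0 y); rewrite porbit_id => /esym.
  by rewrite -eq_porbit_mem.
by move/subset_leq_card; rewrite cards1 -/(ncycles s) leqNgt cs.
Qed.

Lemma transitive_pair_peel (s a : {perm T}) x : involutive a ->
  x \in porbit (tperm x (a x) * s) (a x) ->
  transitive_pair s a -> transitive_pair (tperm x (a x) * s) (peel a x).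
Proof.
move=> aK xin conn u w.
set s' := tperm x (a x) * s; set r' := fun u w => (w == s' u) || (w == peel a x u).
have s'step z : r' z (s' z) by rewrite /r' eqxx.
have axTox : connect r' (a x) x by exact: connect_along_porbit xin.
have xToax : connect r' x (a x).
  by apply: connect_along_porbit s'step _; rewrite porbit_sym.
have s'E z : s' z = s (tperm x (a x) z) by rewrite permM.
apply: (connect_sub _ (conn u w)) => z _ /orP [/eqP->|/eqP->].
  case: (eqVneq z x) => [->|zx].
    by apply: connect_trans xToax (connect1 _); have := s'step (a x); rewrite s'E tpermR.
  case: (eqVneq z (a x)) => [->|zax].
    by apply: connect_trans axTox (connect1 _); have := s'step x; rewrite s'E tpermL.
  by apply: connect1; have := s'step z; rewrite s'E tpermD // eq_sym.
case: (eqVneq z x) => [->|zx]; first exact: xToax.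
case: (eqVneq z (a x)) => [->|zax]; first by rewrite aK.
by apply: connect1; rewrite -(peel_other (x := x)) // /r' eqxx orbT.
Qed.

Lemma genus_bound (s a : {perm T}) : involutive a -> transitive_pair s a ->
  (ncycles (a * s) + ncycles s).*2 <= nmoved a + 4.
Proof.
elim: {a}_.+1 {-2}a (ltnSn (nmoved a)) s => // N IH a aN s aK conn.
case: (leqP (ncycles s) 1) => cs.
  by have := ncycles_mul_involution s aK; rewrite -!muln2; lia.
have [x axOut] := exists_crossing conn cs.
have ax : a x != x by apply: contraNneq axOut => ->; exact: porbit_id.
set s' := tperm x (a x) * s.
have cycS : ncycles s = (ncycles s').+1.
  by rewrite ncycles_tperm 1?eq_sym // (negbTE axOut); lia.
have glued : x \in porbit s' (a x).
  have := ncycles_tperm s' ax; rewrite /s' tpermC mulgA tperm2 mul1g -/s'.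
  by case: (x \in porbit s' (a x)) => //; lia.
have prod : a * s = peel a x * s' by rewrite {1}(peel_tperm_r x aK) /s' mulgA.
have := IH (peel a x) _ s' (peel_involutive x aK) (transitive_pair_peel aK glued conn).
rewrite (nmoved_peel aK ax) in aN *; rewrite prod cycS -!muln2; lia.
Qed.

End PermutationGenus.

Lemma fconnect_porbit (T : finType) (f : T -> T) (p : {perm T}) :
  p =1 f -> forall x y, fconnect f x y = (y \in porbit p x).
Proof.
move=> pf x y; apply/idP/idP.
  by move/iter_findex <-; rewrite -(eq_iter pf) -permX; exact: mem_porbit.
by case/porbitP => i ->; rewrite permX (eq_iter pf); exact: fconnect_iter.
Qed.

Lemma card_fibres_porbits (T U : finType) (p : {perm T}) (f : T -> U) :
  (forall x y, f x = f y <-> y \in porbit p x) -> (forall u, exists x, f x = u) ->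
  #|U| = ncycles p.
Proof.
move=> fE fsurj; rewrite /ncycles; pose fibre u := [set x | f x == u].
have fibreE x : fibre (f x) = porbit p x.
  by apply/setP => y; rewrite inE; apply/eqP/idP => [/esym/fE|/fE/esym].
have fibre_inj : injective fibre.
  move=> u1 u2 E; have [x fx] := fsurj u1.
  have : x \in fibre u1 by rewrite inE fx.
  by rewrite E inE fx => /eqP.
have -> : porbits p = [set fibre u | u : U].
  apply/setP => S; apply/imsetP/imsetP => [[x _ ->]|[u _ ->]].
    by exists (f x); rewrite ?fibreE.
  by have [x <-] := fsurj u; exists x; rewrite ?fibreE.
by rewrite card_imset.
Qed.

Lemma set2_eq (T : finType) (x y x' y' : T) : [set x; y] = [set x'; y'] -> x != y ->
  (x = x' /\ y = y') \/ (x = y' /\ y = x').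
Proof.
move=> E xy.
have /set2P [xx'|xy'] : x \in [set x'; y'] by rewrite -E set21.
  left; split => //.
  have /set2P [yx'|//] : y \in [set x'; y'] by rewrite -E set22.
  by move: xy; rewrite xx' yx' eqxx.
right; split => //.
have /set2P [//|yy'] : y \in [set x'; y'] by rewrite -E set22.
by move: xy; rewrite xy' yy' eqxx.
Qed.

Section PlaneMap.
Variables (D V F : finType) (e n : D -> D) (vert : D -> V) (fc : D -> F).
Hypothesis planeG : simple_2conn_plane_graph e n vert fc.

Lemma edgeK : involutive e.
Proof. by case: planeG => [[[edgeK _] _ _ _ _] _ _]. Qed.

Lemma edge_fixfree d : e d != d.
Proof. by case: planeG => [[[_ [fixfree _]] _ _ _ _] _ _]. Qed.

Lemma rot_inj : injective n.
Proof. by case: planeG => [[[_ [_ rotI]] _ _ _ _] _ _]. Qed.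

Lemma same_vert d d' : vert d = vert d' <-> fconnect n d d'.
Proof. by case: planeG => [[_ [vertE _] _ _ _] _ _]. Qed.

Lemma vert_surj v : exists d, vert d = v.
Proof. by case: planeG => [[_ [_ vertS] _ _ _] _ _]. Qed.

Lemma same_face d d' : fc d = fc d' <-> fconnect (face_perm e n) d d'.
Proof. by case: planeG => [[_ _ [faceE _] _ _] _ _]. Qed.

Lemma face_surj p : exists d, fc d = p.
Proof. by case: planeG => [[_ _ [_ faceS] _ _] _ _]. Qed.

Lemma euler_formula : ((#|V| + #|F|) * 2 = #|D| + 4)%N.
Proof. by case: planeG => [[_ _ _ _ euler] _ _]. Qed.

Lemma no_loop d : vert (e d) != vert d.
Proof. by case: planeG => _ [loopless _] _. Qed.

Lemma no_multi_edge d d' : vert d = vert d' -> vert (e d) = vert (e d') -> d = d'.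
Proof. by case: planeG => _ [_ simple] _; apply: simple. Qed.

Lemma three_vertices : (3 <= #|V|)%N.
Proof. by case: planeG => _ _ [V3 _]. Qed.

Lemma two_connected_path x y z : y != x -> z != x ->
  connect (fun u w => [&& adj e vert u w, u != x & w != x]) y z.
Proof. by case: planeG => _ _ [_ conn2]; apply: conn2. Qed.

Lemma vert_rot d : vert (n d) = vert d.
Proof. by apply/esym/same_vert; exact: fconnect1. Qed.

Lemma vert_iter_rot k d : vert (iter k n d) = vert d.
Proof. by elim: k => //= k IH; rewrite vert_rot. Qed.

Lemma face_next d : fc (n (e d)) = fc d.
Proof. by apply/esym/same_face; exact: (fconnect1 (face_perm e n)). Qed.

Definition rotp : {perm D} := perm rot_inj.
Definition edgep : {perm D} := perm (can_inj edgeK).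
Definition facep : {perm D} := (edgep * rotp)%g.

Lemma edgepK : involutive edgep.
Proof. by move=> d; rewrite !permE edgeK. Qed.

Lemma facepE d : facep d = n (e d).
Proof. by rewrite permM !permE. Qed.

Lemma same_vert_porbit d d' : vert d = vert d' <-> d' \in porbit rotp d.
Proof. by rewrite -(fconnect_porbit (permE rot_inj)); exact: same_vert. Qed.

Lemma same_face_porbit d d' : fc d = fc d' <-> d' \in porbit facep d.
Proof. by rewrite -(fconnect_porbit (f := face_perm e n) facepE); exact: same_face. Qed.

Lemma euler_perm : ((ncycles facep + ncycles rotp).*2 = nmoved edgep + 4)%N.
Proof.
have -> : ncycles rotp = #|V| by apply/esym/card_fibres_porbits/vert_surj; exact: same_vert_porbit.
have -> : ncycles facep = #|F| by apply/esym/card_fibres_porbits/face_surj; exact: same_face_porbit.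
have -> : nmoved edgep = #|D|.
  by rewrite /nmoved -cardsT; apply: eq_card => d; rewrite !inE permE edge_fixfree.
by rewrite addnC -muln2 euler_formula.
Qed.

(* Splitting the rotation at one vertex (cutting its cycle of darts in two)
   keeps the map connected, because the graph minus that vertex is connected. *)
Lemma split_vertex_transitive u w : vert u = vert w ->
  transitive_pair (tperm u w * rotp) edgep.
Proof.
move=> uw; set v0 := vert u; set s' := (tperm u w * rotp)%g.
set r' := fun x y => (y == s' x) || (y == edgep x).
have edge_step z : r' z (e z) by rewrite /r' /edgep permE eqxx orbT.
have s'E z : vert z != v0 -> s' z = n z.
  by move=> zv; rewrite permM permE tpermD //; apply: contra_neq zv => <-.
have at_vertex z z' : vert z = vert z' -> vert z != v0 -> connect r' z z'.
  move=> /same_vert /iter_findex <-; elim: (findex n z z') => [|k IH] zv.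
    exact: connect0.
  apply: connect_trans (IH zv) (connect1 _).
  by rewrite /r' /= s'E ?eqxx // vert_iter_rot.
have along_path x y : x != v0 ->
    connect (fun u w => [&& adj e vert u w, u != v0 & w != v0]) x y ->
    forall z z', vert z = x -> vert z' = y -> connect r' z z'.
  move=> xv /connectP [p pth ->] {y}.
  elim: p x xv pth => [|y p IH] x xv /= pth z z' zx zy.
    by apply: at_vertex; rewrite ?zx ?zy.
  case/andP: pth => /and3P [/existsP [d /andP [/eqP dx /eqP dy]] _ yv] pth.
  apply: connect_trans (at_vertex z d _ _) _; rewrite ?zx ?dx //.
  exact: connect_trans (connect1 (edge_step d)) (IH y yv pth _ z' dy zy).
have off_v0 z : exists2 z0, vert z0 != v0 & connect r' z z0 /\ connect r' z0 z.
  case: (eqVneq (vert z) v0) => zv; last by exists z => //; split; exact: connect0.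
  exists (e z); first by rewrite -zv no_loop.
  by split; apply: connect1; [|have := edge_step (e z); rewrite edgeK].
move=> z z'; have [z0 z0v [zz0 _]] := off_v0 z; have [z0' z0v' [_ z0z']] := off_v0 z'.
apply: connect_trans zz0 (connect_trans _ z0z').
exact: along_path z0v (two_connected_path z0v z0v') _ _ erefl erefl.
Qed.

(* Jordan property of faces: a face boundary passes through each vertex at
   most once.  Otherwise cutting that vertex and that face in two would add
   a vertex and a face to a connected map, contradicting the genus bound. *)
Lemma face_vert_inj d1 d2 : fc d1 = fc d2 -> vert d1 = vert d2 -> d1 = d2.
Proof.
move=> f12 v12; case: (eqVneq d1 d2) => // d12; exfalso.
set x1 := (facep^-1)%g d1; set x2 := (facep^-1)%g d2.
have rot_x1 : n (e x1) = d1 by rewrite -facepE permKV.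
have rot_x2 : n (e x2) = d2 by rewrite -facepE permKV.
have x12 : x1 != x2 by apply: contra_neq d12 => x1x2; rewrite -rot_x1 -rot_x2 x1x2.
have uw : e x1 != e x2 by apply: contra_neq x12 => /(can_inj edgeK).
have vertSplit : ncycles (tperm (e x1) (e x2) * rotp) = (ncycles rotp).+1.
  rewrite ncycles_tperm // ifT //; apply/same_vert_porbit.
  by rewrite -(vert_rot (e x1)) -(vert_rot (e x2)) rot_x1 rot_x2.
have faceSplit : ncycles (edgep * (tperm (e x1) (e x2) * rotp)) = (ncycles facep).+1.
  have -> : (edgep * (tperm (e x1) (e x2) * rotp) = tperm x1 x2 * facep)%g.
    apply/permP => z; rewrite !permM !(permE (can_inj edgeK)) !(permE rot_inj).
    by rewrite (inj_tperm _ _ _ (can_inj edgeK)).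
  rewrite ncycles_tperm // ifT //; apply/same_face_porbit.
  by rewrite -face_next rot_x1 -[fc x2]face_next rot_x2.
have := genus_bound edgepK (split_vertex_transitive (u := e x1) (w := e x2) _).
rewrite -[vert (e x1)]vert_rot -[vert (e x2)]vert_rot rot_x1 rot_x2 => /(_ v12).
by rewrite vertSplit faceSplit -euler_perm; lia.
Qed.

(* A vertex of a 2-connected graph on at least 3 vertices has degree >= 2,
   so the rotation has no fixed dart. *)
Lemma rot_fixfree d : n d != d.
Proof.
apply/eqP => nd.
have alone d' : vert d' = vert d -> d' = d.
  move=> /esym /same_vert /iter_findex <-.
  by elim: (findex n d d') => //= k ->.
have xw : vert d != vert (e d) by rewrite eq_sym no_loop.
have /subsetPn [z _] : ~~ ([set: V] \subset [set vert d; vert (e d)]).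
  apply/negP => /subset_leq_card; rewrite cardsT cards2 xw.
  by have := three_vertices; lia.
rewrite !inE negb_or => /andP [zw zx].
have /connectP [[|y p] /= pth zE] := two_connected_path xw zx.
  by move: zw; rewrite zE eqxx.
case/andP: pth => /and3P [/existsP [d' /andP [/eqP d'd /eqP d'y]] _ yx] _.
by move: yx; rewrite -d'y (alone d' d'd) eqxx.
Qed.

Local Open Scope ring_scope.

Definition face_darts (p : F) : {set D} := [set d | fc d == p].
Definition dart_edge (d : D) : {set V} := [set vert d; vert (e d)].

Lemma vert_inj_face p : {in face_darts p &, injective vert}.
Proof. by move=> d d'; rewrite !inE => /eqP dp /eqP d'p; apply: face_vert_inj; rewrite dp d'p. Qed.

Lemma dart_edge_eq d d' : dart_edge d = dart_edge d' -> d = d' \/ d = e d'.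
Proof.
move=> /set2_eq [|[vv ee]|[vv ee]]; first by rewrite eq_sym no_loop.
  by left; apply: no_multi_edge.
by right; apply: no_multi_edge; rewrite ?edgeK.
Qed.

Lemma edge_inj_face p : {in face_darts p &, injective dart_edge}.
Proof.
move=> d d' dp d'p /dart_edge_eq [//|dE].
have nd'p : n d' \in face_darts p by rewrite inE -[d']edgeK -dE face_next; rewrite inE in dp.
have := vert_inj_face d'p nd'p; rewrite vert_rot => /(_ erefl) /esym nd'.
by have := rot_fixfree d'; rewrite nd' eqxx.
Qed.

(* By the Jordan property, sums over the vertices and edges of a face are
   sums over its darts. *)
Lemma flen_darts p : flen e vert fc p = #|face_darts p|.
Proof. by rewrite /flen /face_edges card_in_imset //; exact: edge_inj_face. Qed.

Lemma sum_face_verts p (f : V -> int) :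
  \sum_(v in face_verts vert fc p) f v = \sum_(d in face_darts p) f (vert d).
Proof. by rewrite /face_verts big_imset //; exact: vert_inj_face. Qed.

Lemma sum_face_edges p (g : {set V} -> int) :
  \sum_(s in face_edges e vert fc p) g s = \sum_(d in face_darts p) g (dart_edge d).
Proof. by rewrite /face_edges big_imset //; exact: edge_inj_face. Qed.

Lemma prod_dart_edge d (f : V -> int) :
  \prod_(v in dart_edge d) f v = f (vert d) * f (vert (e d)).
Proof. by rewrite big_setU1 ?big_set1 // inE eq_sym no_loop. Qed.

(* Along a face, the head of each dart is the tail of the next one. *)
Lemma sum_face_heads p (f : V -> int) :
  \sum_(d in face_darts p) f (vert (e d)) = \sum_(d in face_darts p) f (vert d).
Proof.
rewrite [RHS](reindex_inj (perm_inj (s := facep))) /=.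
by apply: eq_big => d; rewrite ?inE facepE ?face_next ?vert_rot.
Qed.

Lemma sum_over_faces (G : D -> int) : \sum_p \sum_(d in face_darts p) G d = \sum_d G d.
Proof.
rewrite [RHS](partition_big fc predT) //=.
by apply: eq_bigr => p _; apply: eq_bigl => d; rewrite inE.
Qed.

Lemma sum_graph_edges (G : {set V} -> int) :
  \sum_d G (dart_edge d) = 2 * \sum_(s in graph_edges e vert) G s.
Proof.
rewrite -big_set /= (partition_big_imset dart_edge) /=.
rewrite mulr_sumr; apply: eq_big => [s|_ /imsetP [d0 _ ->]].
  by apply/imsetP/imsetP => -[d _ ->]; exists d.
have -> : \sum_(d in [set: D] | dart_edge d == dart_edge d0) G (dart_edge d) =
          \sum_(d in [set d0; e d0]) G (dart_edge d0).
  apply: eq_big => [d|d /andP [_ /eqP ->] //]; rewrite inE.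
  apply/eqP/set2P => [/dart_edge_eq|[->|->]] //; by rewrite /dart_edge edgeK setUC.
by rewrite big_setU1 ?big_set1 ?inE 1?eq_sym ?edge_fixfree //=; ring.
Qed.

(* The face contribution is invariant under the shift  a_p -> a_p + beta,
   b_v -> b_v - beta, up to a telescoping term that vanishes around the face. *)
Lemma face_term_shift p (b : V -> int) (alpha beta : int) :
  (flen e vert fc p)%:R * (alpha + beta) ^+ 2
  + 2 * (alpha + beta) * \sum_(v in face_verts vert fc p) (b v - beta)
  + \sum_(s in face_edges e vert fc p) \prod_(v in s) (b v - beta)
  = (flen e vert fc p)%:R * alpha ^+ 2 + 2 * alpha * \sum_(v in face_verts vert fc p) b v
    + \sum_(d in face_darts p) b (vert d) * b (vert (e d)).
Proof.
rewrite flen_darts !sum_face_verts sum_face_edges.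
rewrite (eq_bigr _ (fun d _ => prod_dart_edge d (fun v => b v - beta))).
have telescope : \sum_(d in face_darts p) beta * (b (vert d) - b (vert (e d))) = 0.
  by rewrite -mulr_sumr sumrB sum_face_heads subrr mulr0.
have const (c : int) : #|face_darts p|%:R * c = \sum_(d in face_darts p) c.
  by rewrite sumr_const mulr_natl.
rewrite !const !mulr_sumr -!big_split /= -[RHS]addr0.
rewrite -[X in _ = _ + X]telescope -big_split /=.
by apply: eq_bigr => d _; ring.
Qed.

(* Expansion of A by shifting every bounded face by an arbitrary beta_p;
   the cross terms  b_v b_v'  of the edges are redistributed to the faces. *)
Lemma A_shift (pinf : F) (a : F -> int) (b : V -> int) (beta : F -> int) :
  Aform e vert fc pinf a b =
    \sum_(p | p != pinf)
      ((flen e vert fc p)%:R * (a p + beta p) ^+ 2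
       + 2 * (a p + beta p) * \sum_(v in face_verts vert fc p) (b v - beta p)
       + \sum_(s in face_edges e vert fc p) \prod_(v in s) (b v - beta p))
    + \sum_(s in face_edges e vert fc pinf) \prod_(v in s) b v.
Proof.
rewrite /Aform (eq_bigr _ (fun p _ => face_term_shift p b (a p) (beta p))).
rewrite [in RHS]big_split /= -addrA; congr (_ + _).
rewrite -(sum_graph_edges (fun s => \prod_(v in s) b v)) sum_face_edges.
rewrite !(eq_bigr _ (fun d _ => prod_dart_edge d b)).
by rewrite -sum_over_faces (bigD1 pinf) //= addrC.
Qed.

Lemma bface_le (b : V -> int) p v :
  v \in face_verts vert fc p -> bface vert fc b p <= b v.
Proof.
rewrite /bface; case: pickP => [d _|noDart vp]; first exact: bigmin_le_cond.
by case/imsetP: vp => d; rewrite inE noDart.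
Qed.

Lemma bface_attained (b : V -> int) p :
  exists2 w, w \in face_verts vert fc p & bface vert fc b p = b w.
Proof.
rewrite /bface; case: pickP => [d0 /eqP d0p | noDart]; last first.
  by have [d dp] := face_surj p; have := noDart d; rewrite dp eqxx.
apply: (big_ind (fun m => exists2 w, w \in face_verts vert fc p & m = b w)).
- by exists (vert d0); rewrite // -d0p; apply: imset_f; rewrite inE.
- move=> x y [wx wxp ->] [wy wyp ->]; rewrite minEle.
  by case: ifP => _; [exists wx|exists wy].
- by move=> v vp; exists v.
Qed.

Lemma face_edge_verts p s v :
  s \in face_edges e vert fc p -> v \in s -> v \in face_verts vert fc p.
Proof.
case/imsetP => d dp -> /set2P [->|->]; first exact: imset_f.
by rewrite -vert_rot imset_f // inE face_next; rewrite inE in dp.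
Qed.

(* For an admissible state every term of a bounded face is nonnegative:
   a_p + b_p = a_p + b_w >= 0 at a minimizing vertex w, and b_v - b_p >= 0. *)
Lemma bounded_face_terms_ge0 pinf a b p : admissible vert fc pinf a b -> p != pinf ->
  let bp := bface vert fc b in
  [/\ 0 <= (flen e vert fc p)%:R * (a p + bp p) ^+ 2,
      0 <= 2 * (a p + bp p) * \sum_(v in face_verts vert fc p) (b v - bp p),
      (forall v, v \in face_verts vert fc p -> 0 <= (a p + bp p) * (b v - bp p)),
      0 <= \sum_(s in face_edges e vert fc p) \prod_(v in s) (b v - bp p)
    & (forall s, s \in face_edges e vert fc p -> 0 <= \prod_(v in s) (b v - bp p))].
Proof.
move=> [adm_bounded _] pinfp bp.
have shift_ge0 : 0 <= a p + bp p.
  by have [w wp bpw] := bface_attained b p; rewrite /bp bpw; exact: adm_bounded.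
have excess_ge0 v : v \in face_verts vert fc p -> 0 <= b v - bp p.
  by move=> vp; rewrite subr_ge0; exact: bface_le.
have edge_ge0 s : s \in face_edges e vert fc p -> 0 <= \prod_(v in s) (b v - bp p).
  by move=> sp; apply: prodr_ge0 => v vs; apply: excess_ge0; exact: face_edge_verts sp vs.
split.
- by rewrite mulr_ge0 ?ler0n ?sqr_ge0.
- by rewrite !mulr_ge0 // sumr_ge0.
- by move=> v vp; rewrite mulr_ge0 ?excess_ge0.
- by rewrite sumr_ge0.
- exact: edge_ge0.
Qed.

Lemma outer_edge_ge0 pinf a b s : admissible vert fc pinf a b ->
  s \in face_edges e vert fc pinf -> 0 <= \prod_(v in s) b v.
Proof.
move=> [_ adm_outer] sp; apply: prodr_ge0 => v vs.
by apply: adm_outer; exact: face_edge_verts sp vs.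
Qed.

End PlaneMap.

Unset Implicit Arguments.
Local Open Scope ring_scope.

Theorem theorem1p2 (D V F : finType) (e n : D -> D) (vert : D -> V) (fc : D -> F)
  (pinf : F) (a : F -> int) (b : V -> int) :
  simple_2conn_plane_graph e n vert fc ->
  admissible vert fc pinf a b ->
  let bp := bface vert fc b in
  [/\ Aform e vert fc pinf a b =
        \sum_(p | p != pinf)
          ((flen e vert fc p)%:R * (a p + bp p) ^+ 2
           + 2 * (a p + bp p) * \sum_(v in face_verts vert fc p) (b v - bp p)
           + \sum_(s in face_edges e vert fc p) \prod_(v in s) (b v - bp p))
        + \sum_(s in face_edges e vert fc pinf) \prod_(v in s) b v,
      (forall p, p != pinf ->
        [/\ 0 <= (flen e vert fc p)%:R * (a p + bp p) ^+ 2,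
            0 <= 2 * (a p + bp p) * \sum_(v in face_verts vert fc p) (b v - bp p),
            (forall v, v \in face_verts vert fc p -> 0 <= (a p + bp p) * (b v - bp p)),
            0 <= \sum_(s in face_edges e vert fc p) \prod_(v in s) (b v - bp p)
          & (forall s, s \in face_edges e vert fc p -> 0 <= \prod_(v in s) (b v - bp p))]),
      0 <= \sum_(s in face_edges e vert fc pinf) \prod_(v in s) b v,
      (forall s, s \in face_edges e vert fc pinf -> 0 <= \prod_(v in s) b v)
    & 0 <= Aform e vert fc pinf a b].
Proof.
move=> planeG adm bp.
have bounded p := bounded_face_terms_ge0 planeG (p := p) adm.
have outer s := outer_edge_ge0 planeG (s := s) adm.
have identity := A_shift planeG pinf a b bp.
split=> //; first by rewrite sumr_ge0.
rewrite identity addr_ge0 ?sumr_ge0 // => p /bounded [faceSq faceLin _ faceEdges _].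
by rewrite !addr_ge0.
Qed.
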